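(* Suppose the bandwidth is insufficient, i.e. $BW_{max,EUT}\le\sum_{i\in S_{EUT}}\bar F^{-1}_{B_i}(\lambda_i;b^* )$ with $\lambda_i=w^{-1}(r_{EUT}(b^* )/h_i(b^* ))$, and consider bandwidth reallocation: the SP offers the same rate $b^*$ to the same set $S_{EUT}$ and may choose any allocation $(BW'_i)_{i\in S_{EUT}}$, $BW'_i\ge0$, with $\sum_i BW'_i=BW_{max,EUT}$, and any price $r'$. For such an allocation let $L(BW'):=\max_{i\in S_{EUT}}\{r_{EUT}(b^* )-h_i(b^* )w(\bar F_{B_i}(b^*;BW'_i))\}$. Then (i) $\inf_{BW'}L(BW')\le L(BW_{EUT})=L_{RRM}$, so allowing reallocation does not increase the minimal revenue loss compared with the strict constraints; and (ii) for every admissible allocation $BW'$, $L(BW')\ge0$; equivalently, there is no admissible allocation and price $r'\ge r_{EUT}(b^* )$ at which all users in $S_{EUT}$ accept under prospect theory. In particular the EUT revenue cannot be fully recovered by bandwidth reallocation.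
   Context: A service provider (SP) serves a finite set $S_{EUT}$ of end-users. For each user $i$ there is a benefit function $h_i:(0,\infty)\to(0,\infty)$ and, for each rate $b>0$, a service-guarantee function $BW\mapsto\bar F_{B_i}(b;BW)$ from $[0,\infty)$ to $[0,1)$, continuous and strictly increasing with $\bar F_{B_i}(b;0)=0$. The EUT pricing function is $r_{EUT}:(0,\infty)\to(0,\infty)$. A probability weighting function $w:[0,1]\to[0,1]$ is a continuous strictly increasing bijection (e.g. Prelec's $w(p)=\exp(-(-\ln p)^\alpha)$, $\alpha\in(0,1]$). A user offered rate $b$ at price $r$ with bandwidth $BW_i$ accepts under EUT iff $h_i(b)\bar F_{B_i}(b;BW_i)>r$, and under prospect theory (PT) iff $h_i(b)\,w(\bar F_{B_i}(b;BW_i))>r$. Notation: for $q\ge0$, $\bar F^{-1}_{B_i}(q;b)$ is the unique $BW\ge0$ with $\bar F_{B_i}(b;BW)=q$ if $q$ lies in the range of $\bar F_{B_i}(b;\cdot)$ and $+\infty$ otherwise; $w^{-1}(x):=+\infty$ for $x>1$ and $\bar F^{-1}_{B_i}(+\infty;b):=+\infty$. EUT equilibrium data: a rate $b^*=b^*_{1,EUT}>0$ and bandwidths $BW_{EUT}=(BW_{i,EUT})_{i\in S_{EUT}}$, $BW_{i,EUT}\ge0$, with $\sum_{i}BW_{i,EUT}=BW_{max,EUT}$, such that every $i\in S_{EUT}$ accepts under EUT the offer of rate $b^*$ at price $r_{EUT}(b^* )$ with bandwidth $BW_{i,EUT}$. $L_{RRM}:=\max_{i\in S_{EUT}}\{r_{EUT}(b^*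 )-h_i(b^* )w(\bar F_{B_i}(b^*;BW_{i,EUT}))\}$. *)

From Stdlib Require Import Reals List.
Open Scope R_scope.

(* Users of S_EUT are indexed by 0..n-1. *)

Definition sumU (n : nat) (f : nat -> R) : R :=
  fold_right Rplus 0 (map f (seq 0 n)).

(* max_{i<n} f i  (meaningful for n >= 1) *)
Definition maxU (n : nat) (f : nat -> R) : R :=
  fold_right Rmax (f 0%nat) (map f (seq 0 n)).

Definition continuous_on (D : R -> Prop) (f : R -> R) : Prop :=
  forall x, D x -> forall eps, 0 < eps -> exists delta, 0 < delta /\
    forall y, D y -> Rabs (y - x) < delta -> Rabs (f y - f x) < eps.

Definition strictly_increasing_on (D : R -> Prop) (f : R -> R) : Prop :=
  forall x y, D x -> D y -> x < y -> f x < f y.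

Definition unit_interval (p : R) : Prop := 0 <= p <= 1.
Definition nonneg (x : R) : Prop := 0 <= x.

Definition prob_weighting (w : R -> R) : Prop :=
  (forall p, unit_interval p -> unit_interval (w p)) /\
  (forall q, unit_interval q -> exists p, unit_interval p /\ w p = q) /\
  strictly_increasing_on unit_interval w /\
  continuous_on unit_interval w.

Definition service_guarantee (F : R -> R -> R) : Prop :=
  forall b, 0 < b ->
    (forall BW, 0 <= BW -> 0 <= F b BW < 1) /\
    continuous_on nonneg (F b) /\
    strictly_increasing_on nonneg (F b) /\
    F b 0 = 0.

Definition admissible (n : nat) (BWmax : R) (BW : nat -> R) : Prop :=
  (forall i, (i < n)%nat -> 0 <= BW i) /\ sumU n BW = BWmax.

(* t is the finite value of  Fbar^{-1}_{B_i}(lambda_i; b)  where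
   lambda_i = w^{-1}(r / h_i(b)):  lambda_i is a genuine value in [0,1]
   with w lambda_i = r/h_i(b), and t >= 0 with F_i(b; t) = lambda_i.
   If no such t exists the threshold is +infinity. *)
Definition finite_threshold (w : R -> R) (h : nat -> R -> R)
    (F : nat -> R -> R -> R) (r b : R) (i : nat) (t : R) : Prop :=
  0 <= t /\ exists lam, unit_interval lam /\ w lam = r / h i b /\ F i b t = lam.

(* Insufficient bandwidth: BWmax <= sum_i Fbar^{-1}(lambda_i; b) in the
   extended reals.  If some threshold is +infinity the sum is +infinity and
   the condition holds; otherwise thresholds are unique finite reals. *)
Definition insufficient_bandwidth (n : nat) (w : R -> R) (h : nat -> R -> R)
    (F : nat -> R -> R -> R) (r b BWmax : R) : Prop :=
  forall ts : nat -> R,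
    (forall i, (i < n)%nat -> finite_threshold w h F r b i (ts i)) ->
    BWmax <= sumU n ts.

Definition loss (n : nat) (w : R -> R) (h : nat -> R -> R)
    (F : nat -> R -> R -> R) (r b : R) (BW : nat -> R) : R :=
  maxU n (fun i => r - h i b * w (F i b (BW i))).

(* If every user accepted under prospect theory with some admissible allocation BW',
   then w (F_i(b; BW'_i)) > r / h_i(b), so lambda_i = w^{-1}(r / h_i(b)) < F_i(b; BW'_i) and,
   by the intermediate value theorem, the threshold F_i^{-1}(lambda_i; b) is a finite real
   strictly below BW'_i.  Summing gives a total threshold below BWmax, contradicting
   insufficient bandwidth. *)

From Pilot Require Import Defs.
From Stdlib Require Import Reals List Lra Lia ClassicalEpsilon.
Open Scope R_scope.

Lemma continuity_Rmax0_comp (f : R -> R) :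
  continuous_on Defs.nonneg f -> continuity (fun x => f (Rmax 0 x)).
Proof.
  intros Hf x eps Heps.
  destruct (Hf (Rmax 0 x) (Rmax_l 0 x) eps Heps) as [d [Hd Hclose]].
  exists d; split; [lra|].
  intros y [_ Hyx]; simpl in *; unfold R_dist in *.
  apply Hclose; [apply Rmax_l|].
  eapply Rle_lt_trans; [|exact Hyx].
  unfold Rmax; destruct (Rle_dec 0 y), (Rle_dec 0 x);
    unfold Rabs; repeat destruct Rcase_abs; lra.
Qed.

Lemma continuous_on_nonneg_IVT (g : R -> R) (x y : R) :
  continuous_on Defs.nonneg g -> 0 <= x -> g 0 <= y < g x ->
  exists t, 0 <= t < x /\ g t = y.
Proof.
  intros Hg Hx [Hy0 Hyx].
  assert (Hxpos : 0 < x).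
  { destruct Hx as [Hx|Hx]; [exact Hx|]. subst x; lra. }
  destruct Hy0 as [Hy0|Hy0]; [|exists 0; split; [lra|exact Hy0]].
  set (k := fun z => g (Rmax 0 z) - y).
  assert (Hk : continuity k).
  { apply continuity_minus; [exact (continuity_Rmax0_comp g Hg)|].
    apply continuity_const; intros ? ?; reflexivity. }
  assert (Hk0 : k 0 < 0) by (unfold k; rewrite Rmax_left by lra; lra).
  assert (Hkx : 0 < k x) by (unfold k; rewrite Rmax_right by lra; lra).
  destruct (IVT k 0 x Hk Hxpos Hk0 Hkx) as [t [[Ht0 Htx] Hkt]].
  unfold k in Hkt; rewrite Rmax_right in Hkt by lra.
  exists t; split; [|lra].
  split; [exact Ht0|].
  destruct Htx as [Htx|Htx]; [exact Htx|]. subst t; lra.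
Qed.

Lemma prob_weighting_preimage_lt (w : R -> R) (p q : R) :
  prob_weighting w -> unit_interval p -> 0 <= q -> q < w p ->
  exists lam, unit_interval lam /\ w lam = q /\ lam < p.
Proof.
  intros [Hw01 [Hsurj [Hinc _]]] Hp Hq Hqp.
  pose proof (Hw01 p Hp) as Hwp; unfold unit_interval in Hwp.
  destruct (Hsurj q) as [lam [Hlam Hwlam]]; [unfold unit_interval; lra|].
  exists lam; split; [exact Hlam|split; [exact Hwlam|]].
  destruct (Rlt_le_dec lam p) as [Hlt|[Hgt|Heq]]; [exact Hlt| |].
  - pose proof (Hinc p lam Hp Hlam Hgt); lra.
  - subst lam; lra.
Qed.

Lemma sumU_lt (n : nat) (f g : nat -> R) :
  (0 < n)%nat -> (forall i, (i < n)%nat -> f i < g i) -> sumU n f < sumU n g.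
Proof.
  unfold sumU; intros Hn Hfg.
  assert (Hseq : forall i, In i (seq 0 n) -> f i < g i)
    by (intros i Hi; apply in_seq in Hi; apply Hfg; lia).
  assert (Hne : seq 0 n <> nil) by (destruct n; [lia|discriminate]).
  induction (seq 0 n) as [|a l IH]; [congruence|].
  simpl; pose proof (Hseq a (or_introl eq_refl)) as Ha.
  destruct l as [|b l]; [simpl; lra|].
  assert (Hl : fold_right Rplus 0 (map f (b :: l)) < fold_right Rplus 0 (map g (b :: l))).
  { apply IH; [intros i Hi; apply Hseq; right; exact Hi|discriminate]. }
  lra.
Qed.

Lemma maxU_ge (n : nat) (f : nat -> R) (i : nat) : (i < n)%nat -> f i <= maxU n f.
Proof.
  unfold maxU; intros Hi.
  assert (Hin : In i (seq 0 n)) by (apply in_seq; lia).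
  induction (seq 0 n) as [|a l IH]; [destruct Hin|].
  simpl; destruct Hin as [<-|Hin]; [apply Rmax_l|].
  eapply Rle_trans; [exact (IH Hin)|apply Rmax_r].
Qed.

Lemma choice_below (n : nat) (P : nat -> R -> Prop) :
  (forall i, (i < n)%nat -> exists t, P i t) ->
  exists ts : nat -> R, forall i, (i < n)%nat -> P i (ts i).
Proof.
  intros HP; exists (fun i => epsilon (inhabits 0) (P i)).
  intros i Hi; apply epsilon_spec, HP, Hi.
Qed.

Section Reallocation.

Variables (n : nat) (h : nat -> R -> R) (F : nat -> R -> R -> R) (w : R -> R).
Variables (r b BWmax : R).
Hypothesis Hh : forall i, (i < n)%nat -> 0 < h i b.
Hypothesis HF : forall i, (i < n)%nat -> service_guarantee (F i).
Hypothesis Hr : 0 <= r.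
Hypothesis Hw : prob_weighting w.
Hypothesis Hb : 0 < b.

Lemma finite_threshold_lt_accepting_bandwidth (i : nat) (BW : R) :
  (i < n)%nat -> 0 <= BW -> h i b * w (F i b BW) > r ->
  exists t, finite_threshold w h F r b i t /\ t < BW.
Proof.
  intros Hi HBW Hacc.
  destruct (HF i Hi b Hb) as [Hrange [Hcont [_ HF0]]].
  pose proof (Hh i Hi) as Hhi.
  pose proof (Hrange BW HBW) as HFBW.
  assert (Hq0 : 0 <= r / h i b) by (unfold Rdiv; apply Rmult_le_pos; [lra|apply Rlt_le, Rinv_0_lt_compat; lra]).
  assert (Hq : r / h i b < w (F i b BW)).
  { apply (Rmult_lt_reg_l (h i b)); [exact Hhi|].
    unfold Rdiv; rewrite <- Rmult_assoc, Rinv_r_simpl_m by lra; lra. }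
  destruct (prob_weighting_preimage_lt w (F i b BW) (r / h i b) Hw)
    as [lam [Hlam [Hwlam Hlt]]]; [unfold unit_interval; lra|exact Hq0|exact Hq|].
  destruct (continuous_on_nonneg_IVT (F i b) BW lam Hcont HBW)
    as [t [Ht HFt]]; [unfold unit_interval in Hlam; lra|].
  exists t; split; [|lra].
  split; [lra|exists lam; auto].
Qed.

Lemma insufficient_bandwidth_not_all_accept (BW' : nat -> R) :
  (0 < n)%nat -> insufficient_bandwidth n w h F r b BWmax -> admissible n BWmax BW' ->
  ~ (forall i, (i < n)%nat -> h i b * w (F i b (BW' i)) > r).
Proof.
  intros Hn Hins [Hnn Hsum] Hall.
  destruct (choice_below n (fun i t => finite_threshold w h F r b i t /\ t < BW' i))
    as [ts Hts].
  { intros i Hi; exact (finite_threshold_lt_accepting_bandwidth i (BW' i) Hi (Hnn i Hi) (Hall i Hi)). }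
  assert (Hle : BWmax <= sumU n ts) by (apply Hins; intros i Hi; apply Hts, Hi).
  assert (Hlt : sumU n ts < sumU n BW') by (apply sumU_lt; [exact Hn|intros i Hi; apply Hts, Hi]).
  lra.
Qed.

End Reallocation.

Theorem theorem4
  (n : nat) (Hn : (0 < n)%nat)
  (h : nat -> R -> R) (F : nat -> R -> R -> R)
  (rEUT : R -> R) (w : R -> R)
  (Hh : forall i b, (i < n)%nat -> 0 < b -> 0 < h i b)
  (HF : forall i, (i < n)%nat -> service_guarantee (F i))
  (Hr : forall b, 0 < b -> 0 < rEUT b)
  (Hw : prob_weighting w)
  (bstar BWmax : R) (BWEUT : nat -> R)
  (Hb : 0 < bstar)
  (HBW : admissible n BWmax BWEUT)
  (Hacc : forall i, (i < n)%nat ->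
            h i bstar * F i bstar (BWEUT i) > rEUT bstar)
  (Hins : insufficient_bandwidth n w h F (rEUT bstar) bstar BWmax) :
  (forall m, (forall BW', admissible n BWmax BW' ->
                m <= loss n w h F (rEUT bstar) bstar BW') ->
             m <= loss n w h F (rEUT bstar) bstar BWEUT) /\
  (forall BW', admissible n BWmax BW' ->
     0 <= loss n w h F (rEUT bstar) bstar BW') /\
  (~ (exists BW' r', admissible n BWmax BW' /\ r' >= rEUT bstar /\
       forall i, (i < n)%nat -> h i bstar * w (F i bstar (BW' i)) > r')).
Proof.
  assert (Hhb : forall i, (i < n)%nat -> 0 < h i bstar) by (intros i Hi; exact (Hh i bstar Hi Hb)).
  assert (Hr0 : 0 <= rEUT bstar) by (apply Rlt_le, Hr, Hb).
  pose proof (insufficient_bandwidth_not_all_accept n h F w (rEUT bstar) bstar BWmax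
                Hhb HF Hr0 Hw Hb) as Hnot_all.
  split; [intros m Hm; exact (Hm BWEUT HBW)|split].
  - intros BW' Hadm.
    apply Rnot_lt_le; intros Hneg.
    apply (Hnot_all BW' Hn Hins Hadm); intros i Hi.
    pose proof (maxU_ge n (fun j => rEUT bstar - h j bstar * w (F j bstar (BW' j))) i Hi).
    unfold loss in Hneg; lra.
  - intros [BW' [r' [Hadm [Hr' Hall]]]].
    apply (Hnot_all BW' Hn Hins Hadm); intros i Hi.
    specialize (Hall i Hi); lra.
Qed.
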